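(* If $\sigma$ is a subgame perfect equilibrium in $(\mathcal{X},x_0)$, then $\Lambda^*(v)\neq\emptyset$ for every vertex $v$ of $X$ reachable from $x_0$, and $\langle\sigma\rangle_{x_0}\in\Lambda^*(x_0)$.
   Context: Games: an arena $G=(\Pi,V,(V_i)_{i\in\Pi},E)$ has finite player set $\Pi$, finite vertex set $V$ ($|V|\ge2$, $|\Pi|\le|V|$), partition $(V_i)$ and edges $E$ with every vertex having a successor. A quantitative reachability game has targets $F_i\subseteq V$ and $\mathrm{Cost}_i(\rho)=$ least $k$ with $\rho_k\in F_i$ (or $+\infty$). Strategies map histories ending in $V_i$ to successors; a profile $\sigma$ has outcome $\langle\sigma\rangle_{v_0}$. $\sigma$ is a Nash equilibrium if no player can strictly decrease his cost of the outcome by unilaterally changing his strategy; it is a subgame perfect equilibrium if for every history $hv$ from the initial vertex, $\sigma_{|h}$ ($\sigma_{i|h}(h')=\sigma_i(hh')$) is a Nash equilibrium in the game from $v$ with costs $\rho\mapsto\mathrm{Cost}_i(h\rho)$. Extended game of $(\mathcal{G},v_0)$: $\mathcal{X}$ is the reachability game on arena $X$ with $V^X=V\times2^\Pi$, $((v,I),(v',I'))\in E^X$ iff $(v,v')\in E$ and $I'=I\cup\{i:v'\in F_i\}$, $(v,I)\in V^X_i$ iff $v\in V_i$, targets $F^X_i=\{(v,I):i\in I\}$; $x_0=(v_0,\{i:v_0\in F_i\})$. $I(u)$ is the second component of $u$. $\mathcal{I}$ is the set of $I$ with some $(v,I)$ reachable from $x_0$, $N=|\mathcal{I}|$, and $J_1<\dots<J_N$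 a fixed total order of $\mathcal{I}$ extending $I<I'$ iff $I\ne I'$ and some $(v',I')$ is reachable from some $(v,I)$. $V^{\ge J_n}=\{(v,J_m):v\in V,m\ge n\}$. Labelings: for $\lambda:V^X\to\mathbb{N}\cup\{+\infty\}$, a play $\rho$ of $X$ is $\lambda$-consistent if $\mathrm{Cost}_i(\rho_{\ge n})\le\lambda(\rho_n)$ for all $n$ and $i$ with $\rho_n\in V^X_i$. $\lambda^0(u)=0$ if $u\in V^X_i$ and $i\in I(u)$, else $+\infty$. The update of $\lambda^k$ w.r.t. $V^{\ge J_n}$ keeps values outside $V^{\ge J_n}$ and for $u\in V^{\ge J_n}\cap V^X_i$ sets $\lambda^{k+1}(u)=0$ if $i\in I(u)$, otherwise $1+\min_{(u,u')\in E^X}\sup\{\mathrm{Cost}_i(\rho):\rho\in\Lambda^k(u')\}$, $\Lambda^k(u')$ being the $\lambda^k$-consistent plays from $u'$ and $1+(+\infty)=+\infty$. The sequence is generated by $n_0=N$, $\lambda^{k+1}=$ update of $\lambda^k$ w.r.t. $V^{\ge J_{n_k}}$, $n_{k+1}=n_k-1$ if $\lambda^{k+1}=\lambda^k$ and $n_k>1$, else $n_{k+1}=n_k$. It eventually becomes constant, equal to $\lambda^*$; $\Lambda^*(v)$ is the set of $\lambda^*$-consistent plays from $v$. *)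

From mathcomp Require Import all_boot.
From Stdlib Require Import ClassicalEpsilon.
Set Implicit Arguments. Unset Strict Implicit. Unset Printing Implicit Defensive.

(* N ∪ {+oo}: Some n = n, None = +oo *)
Notation ninf := (option nat).
Definition ninf_le (a b : ninf) : bool :=
  match a, b with
  | _, None => true
  | None, Some _ => false
  | Some m, Some n => (m <= n)%N
  end.
Definition ninf_succ (a : ninf) : ninf := omap S a.
Definition ninf_min (a b : ninf) : ninf := if ninf_le a b then a else b.
(* supremum in the complete lattice N ∪ {+oo} (sup of the empty set is 0) *)
Definition is_lub (S : ninf -> Prop) (s : ninf) : Prop :=
  (forall x, S x -> ninf_le x s) /\
  (forall b, (forall x, S x -> ninf_le x b) -> ninf_le s b).
Definition ninf_sup (S : ninf -> Prop) : ninf := epsilon (inhabits None) (is_lub S).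

Section Games.
Variables (T Pl : finType) (owner : T -> Pl) (E : rel T).

Definition is_play (rho : nat -> T) : Prop := forall k, E (rho k) (rho k.+1).
Definition play_from (v : T) (rho : nat -> T) : Prop := rho 0 = v /\ is_play rho.

Definition cost (Fi : {set T}) (rho : nat -> T) : ninf :=
  match excluded_middle_informative (exists k, rho k \in Fi) with
  | left H => Some (@ex_minn (fun k => rho k \in Fi) H)
  | right _ => None
  end.

Definition suffix (rho : nat -> T) (n : nat) : nat -> T := fun k => rho (n + k).
Definition prepend (h : seq T) (rho : nat -> T) : nat -> T :=
  fun k => if k < size h then nth (rho 0) h k else rho (k - size h).

(* a strategy maps a history  rcons h v  (v = last vertex) to a successor *)
Definition strategy := seq T -> T -> T.
Definition valid_strategy (i : Pl) (s : strategy) : Prop :=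
  forall h v, owner v = i -> E v (s h v).
Definition profile := Pl -> strategy.

(* outcome of the profile sg after history prefix h, from vertex v:
   this is <sg_{|h}>_v *)
Definition outcome (sg : profile) (h : seq T) (v : T) : nat -> T :=
  fun k => (iter k (fun hv : seq T * T =>
                      (rcons hv.1 hv.2, sg (owner hv.2) hv.1 hv.2)) (h, v)).2.

Definition deviate (sg : profile) (i : Pl) (tau : strategy) : profile :=
  fun j => if j == i then tau else sg j.

Variable (F : Pl -> {set T}).

(* sg_{|h} is a Nash equilibrium in the game from v with costs rho |-> Cost_i(h rho) *)
Definition NE_after (sg : profile) (h : seq T) (v : T) : Prop :=
  forall i tau, valid_strategy i tau ->
    ninf_le (cost (F i) (prepend h (outcome sg h v)))
            (cost (F i) (prepend h (outcome (deviate sg i tau) h v))).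

Definition is_history (v0 : T) (h : seq T) (v : T) : bool :=
  match h with
  | [::] => v == v0
  | x :: t => (x == v0) && path E x (rcons t v)
  end.

Definition SPE (sg : profile) (v0 : T) : Prop :=
  (forall i, valid_strategy i (sg i)) /\
  forall h v, is_history v0 h v -> NE_after sg h v.

End Games.

Section Extended.
Variables (V Pl : finType) (owner : V -> Pl) (E : rel V) (F : Pl -> {set V}) (v0 : V).

Definition XV := (V * {set Pl})%type.
Definition Xowner (u : XV) : Pl := owner u.1.
Definition Xedge : rel XV :=
  fun u u' => E u.1 u'.1 && (u'.2 == u.2 :|: [set i | u'.1 \in F i]).
Definition XF (i : Pl) : {set XV} := [set u : XV | i \in u.2].
Definition x0 : XV := (v0, [set i | v0 \in F i]).
Definition Xcost (i : Pl) (rho : nat -> XV) : ninf := cost (XF i) rho.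

Definition consistent (lam : {ffun XV -> ninf}) (rho : nat -> XV) : Prop :=
  forall n, ninf_le (Xcost (Xowner (rho n)) (suffix rho n)) (lam (rho n)).
Definition Lambda (lam : {ffun XV -> ninf}) (u : XV) (rho : nat -> XV) : Prop :=
  play_from Xedge u rho /\ consistent lam rho.

Definition lam0 : {ffun XV -> ninf} :=
  [ffun u => if Xowner u \in u.2 then Some 0 else None].

(* the total order J_1 < ... < J_N, given as the duplicate-free list [J_1; ...; J_N] *)
Variable J : seq {set Pl}.

Definition valid_order : Prop :=
  uniq J /\
  (forall I, I \in J <-> exists v, connect Xedge x0 (v, I)) /\
  (forall I I', I \in J -> I' \in J -> I != I' ->
     (exists v v', connect Xedge (v, I) (v', I')) -> index I J < index I' J).

(* u \in V^{>= J_n}  (n is 1-based, J_n = nth set0 J n.-1) *)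
Definition ge_block (n : nat) (u : XV) : bool := (u.2 \in J) && (n.-1 <= index u.2 J).

Definition update (lam : {ffun XV -> ninf}) (n : nat) : {ffun XV -> ninf} :=
  [ffun u => if ge_block n u then
               (if Xowner u \in u.2 then Some 0 else
                ninf_succ (foldr (fun u' acc =>
                   ninf_min (ninf_sup (fun c => exists rho,
                               Lambda lam u' rho /\ c = Xcost (Xowner u) rho)) acc)
                   None (enum [pred u' | Xedge u u'])))
             else lam u].

(* lamseq k = (lambda^k, n_k) *)
Fixpoint lamseq (k : nat) : {ffun XV -> ninf} * nat :=
  match k with
  | 0 => (lam0, size J)
  | k'.+1 => let: (l, n) := lamseq k' in
             let l' := update l n in
             (l', if (l' == l) && (1 < n) then n.-1 else n)
  end.

End Extended.

From Pilot Require Import Defs.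
From mathcomp Require Import all_boot.
From Stdlib Require Import ClassicalEpsilon FunctionalExtensionality.
Set Implicit Arguments. Unset Strict Implicit. Unset Printing Implicit Defensive.

(* For a history h v from x_0 whose last vertex v belongs to player i, let
   c(h v) be the cost for i of the continuation <sg_{|h}>_v.  By induction on
   k, c(h v) <= lambda^k(v) for every such history.  An update step preserves it: if i is not yet served at v (i is not
   in I(v)), the deviation of i from v to a successor u' produces the
   continuation <sg_{|hv}>_{u'}, so the Nash property at h v gives
   c(h v) <= 1 + Cost_i(<sg_{|hv}>_{u'}); and that continuation is
   lambda^k-consistent because each of its suffixes is again a continuation
   along a history, whose cost the induction hypothesis bounds.  Since I only
   grows along a play, i was not served along h either, so prepending h
   shifts both costs compared by the Nash property by |h|.  Once
   lambda^k = lambda^*, all continuations are lambda^*-consistent, and every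
   reachable vertex ends some history. *)

Lemma ninf_le_trans a b c : ninf_le a b -> ninf_le b c -> ninf_le a c.
Proof. by case: a => [a|]; case: b => [b|]; case: c => [c|] //=; apply: leq_trans. Qed.

Lemma ninf_le_omap_add m a b :
  ninf_le (omap (addn m) a) (omap (addn m) b) = ninf_le a b.
Proof. by case: a => [a|]; case: b => [b|] //=; rewrite leq_add2l. Qed.

Lemma ninf_succE a : ninf_succ a = omap (addn 1) a.
Proof. by case: a. Qed.

Lemma ninf_le_succ a b : ninf_le (ninf_succ a) (ninf_succ b) = ninf_le a b.
Proof. by case: a => [a|]; case: b => [b|]. Qed.

Lemma ninf_le_succ_foldr_min (T : eqType) a (g : T -> ninf) (s : seq T) :
  {in s, forall x, ninf_le a (ninf_succ (g x))} ->
  ninf_le a (ninf_succ (foldr (fun x acc => ninf_min (g x) acc) None s)).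
Proof.
elim: s => [|x s IHs] le_a /=; first by case: a {le_a}.
rewrite /ninf_min; case: ifP => _; first by apply: le_a; rewrite mem_head.
by apply: IHs => y s_y; apply: le_a; rewrite inE s_y orbT.
Qed.

Lemma is_lub_exists (S : ninf -> Prop) : exists s, is_lub S s.
Proof.
pose ub b : bool := excluded_middle_informative (forall x, S x -> ninf_le x (Some b)).
have ubP b : reflect (forall x, S x -> ninf_le x (Some b)) (ub b).
  by rewrite /ub; case: excluded_middle_informative => ub_b; constructor.
have [bounded|unbounded] := classic (exists b, ub b).
  exists (Some (ex_minn bounded)); case: ex_minnP => m /ubP ub_m min_m.
  by split=> // -[b|] // /ubP /min_m.
exists None; split=> [[]//|[b|] // /ubP ub_b].
by case: unbounded; exists b.
Qed.

Lemma ninf_sup_ub (S : ninf -> Prop) x : S x -> ninf_le x (ninf_sup S).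
Proof. by have [ub _] := epsilon_spec (inhabits None) _ (is_lub_exists S); apply: ub. Qed.

Section Cost.
Variable T : finType.
Implicit Types (Fi : {set T}) (rho : nat -> T).

Variant cost_spec Fi rho : ninf -> Prop :=
  | CostInfinite of (forall k, rho k \notin Fi) : cost_spec Fi rho None
  | CostFinite k of rho k \in Fi & (forall j, j < k -> rho j \notin Fi) :
      cost_spec Fi rho (Some k).

Lemma costP Fi rho : cost_spec Fi rho (cost Fi rho).
Proof.
rewrite /cost; case: excluded_middle_informative => [hit|miss].
  case: ex_minnP => m rho_m min_m; apply: CostFinite => // j lt_jm.
  by apply: contraL lt_jm => /min_m; rewrite -leqNgt.
by apply: CostInfinite => k; apply/negP => rho_k; apply: miss; exists k.
Qed.

Lemma cost_eq0 Fi rho : rho 0 \in Fi -> cost Fi rho = Some 0.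
Proof.
case: costP => [miss|[|k] // _ /(_ 0 isT) /negP //].
by rewrite (negPf (miss 0)).
Qed.

Lemma cost_shift Fi rho m :
  (forall j, j < m -> rho j \notin Fi) ->
  cost Fi rho = omap (addn m) (cost Fi (Defs.suffix rho m)).
Proof.
rewrite /Defs.suffix => miss_m.
case: (costP Fi rho) => [miss|k rho_k min_k].
  by case: costP => // k; rewrite (negPf (miss (m + k))).
have le_mk : m <= k by rewrite leqNgt; apply: contraL rho_k => /miss_m.
case: costP => [miss|l rho_l min_l].
  by have := miss (k - m); rewrite (subnKC le_mk) rho_k.
rewrite /=; apply/congr1/eqP; rewrite eqn_leq; apply/andP; split; rewrite leqNgt.
  by apply: contraL rho_l => /min_k.
apply: contraL rho_k => lt_k; rewrite -(subnKC le_mk).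
by apply: min_l; rewrite ltn_subLR.
Qed.

Lemma cost_prepend Fi h rho :
  {in h, forall x, x \notin Fi} ->
  cost Fi (prepend h rho) = omap (addn (size h)) (cost Fi rho).
Proof.
move=> miss_h; rewrite (@cost_shift _ _ (size h)).
  congr (omap _ (cost _ _)); apply: functional_extensionality => k.
  by rewrite /Defs.suffix /prepend ltnNge leq_addr addKn.
by move=> j lt_j; rewrite /prepend lt_j; apply/miss_h/mem_nth.
Qed.

End Cost.

Section Outcomes.
Variables (T Pl : finType) (owner : T -> Pl) (E : rel T).
Implicit Types (sg : profile T Pl) (h : seq T) (x v w : T).

Lemma outcomeS sg h v k :
  outcome owner sg h v k.+1 = outcome owner sg (rcons h v) (sg (owner v) h v) k.
Proof. by rewrite /outcome iterSr. Qed.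

Lemma suffix_outcome1 sg h v :
  Defs.suffix (outcome owner sg h v) 1 =
  outcome owner sg (rcons h v) (sg (owner v) h v).
Proof. by apply: functional_extensionality => k; rewrite /Defs.suffix add1n outcomeS. Qed.

Lemma outcome_play sg h v :
  (forall i, valid_strategy owner E i (sg i)) -> is_play E (outcome owner sg h v).
Proof.
move=> valid k; rewrite /outcome iterS.
by case: (iter k _ (h, v)) => h' w /=; apply: valid.
Qed.

Lemma eq_outcome sg sg' h v :
  (forall h' w, size h <= size h' -> sg (owner w) h' w = sg' (owner w) h' w) ->
  outcome owner sg h v = outcome owner sg' h v.
Proof.
move=> eq_sg; apply: functional_extensionality => k.
elim: k h v eq_sg => [//|k IHk] h v eq_sg.
rewrite !outcomeS eq_sg //; apply: IHk => h' w.
by rewrite size_rcons => /ltnW; apply: eq_sg.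
Qed.

Lemma is_history_rcons x h v w :
  is_history E x h v -> E v w -> is_history E x (rcons h v) w.
Proof.
case: h => [/eqP-> Evw|y h /andP[y_x path_h] Evw] /=; first by rewrite eqxx Evw.
by rewrite y_x rcons_path path_h last_rcons.
Qed.

Lemma connect_history x u : connect E x u -> exists h, is_history E x h u.
Proof.
case/connectP=> p; case/lastP: p => [_ ->|p y path_p ->].
  by exists [::]; rewrite /= eqxx.
by exists (x :: p); rewrite last_rcons /= eqxx.
Qed.

Lemma suffix_outcome_history sg x h v n :
  (forall i, valid_strategy owner E i (sg i)) -> is_history E x h v ->
  exists h', is_history E x h' (outcome owner sg h v n) /\
    Defs.suffix (outcome owner sg h v) n = outcome owner sg h' (outcome owner sg h v n).
Proof.
move=> valid; elim: n h v => [|n IHn] h v hist.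
  by exists h; split=> //; apply: functional_extensionality.
have [|h' [hist' suffix_n]] := IHn (rcons h v) (sg (owner v) h v).
  by apply: is_history_rcons; last apply: valid.
exists h'; rewrite outcomeS; split=> //; rewrite -suffix_n -suffix_outcome1.
by apply: functional_extensionality => k; rewrite /Defs.suffix add1n addSn.
Qed.

Definition redirect (s : strategy T) h v u : strategy T :=
  fun h' w => if (h' == h) && (w == v) then u else s h' w.

Lemma valid_redirect i s h v u :
  valid_strategy owner E i s -> E v u -> valid_strategy owner E i (redirect s h v u).
Proof.
move=> valid Evu h' w owner_w; rewrite /redirect.
by case: ifP => [/andP[_ /eqP->] //|_]; apply: valid.
Qed.

Lemma suffix_outcome_redirect sg h v u :
  Defs.suffix (outcome owner (deviate sg (owner v) (redirect (sg (owner v)) h v u)) h v) 1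
  = outcome owner sg (rcons h v) u.
Proof.
rewrite suffix_outcome1 /deviate eqxx /redirect !eqxx /=.
apply: eq_outcome => h' w; rewrite size_rcons => lt_h.
case: eqP => [->|//].
by have /negbTE-> : h' != h by apply: contraTneq lt_h => ->; rewrite ltnn.
Qed.

Variable F : Pl -> {set T}.

Lemma NE_one_step_deviation sg h v u :
  valid_strategy owner E (owner v) (sg (owner v)) -> NE_after owner E F sg h v ->
  {in h, forall x, x \notin F (owner v)} -> v \notin F (owner v) -> E v u ->
  ninf_le (cost (F (owner v)) (outcome owner sg h v))
          (ninf_succ (cost (F (owner v)) (outcome owner sg (rcons h v) u))).
Proof.
move=> valid NE miss_h miss_v Evu.
have := NE _ _ (valid_redirect h valid Evu).
rewrite !cost_prepend // ninf_le_omap_add [X in ninf_le _ X](@cost_shift _ _ _ 1).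
  by rewrite suffix_outcome_redirect ninf_succE.
by case.
Qed.

End Outcomes.

Section ExtendedGame.
Variables (V Pl : finType) (owner : V -> Pl) (E : rel V) (F : Pl -> {set V}).
Local Notation XE := (Xedge E F).
Local Notation Xo := (Xowner owner).

Lemma Xedge_subset u u' : XE u u' -> u.2 \subset u'.2.
Proof. by case/andP=> _ /eqP->; apply: subsetUl. Qed.

Lemma path_Xedge_subset x s :
  path XE x s -> {in x :: s, forall w : XV V Pl, w.2 \subset (last x s).2}.
Proof.
elim: s x => [|y s IHs] x /=; first by move=> _ w; rewrite inE => /eqP->.
case/andP=> Exy path_s w; rewrite inE => /predU1P[->|s_w]; last exact: IHs.
exact: subset_trans (Xedge_subset Exy) (IHs y path_s y (mem_head _ _)).
Qed.

Lemma history_subset x h v :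
  is_history XE x h v -> {in h, forall w : XV V Pl, w.2 \subset v.2}.
Proof.
case: h => [//|y h /andP[_ path_h] w h_w].
have := path_Xedge_subset path_h; rewrite last_rcons; apply.
by rewrite -rcons_cons mem_rcons inE h_w orbT.
Qed.

Variables (v0 : V) (sg : profile (XV V Pl) Pl).
Hypothesis spe : SPE Xo XE (@XF V Pl) sg (x0 F v0).
Local Notation xinit := (x0 F v0).

Definition spe_bounded_by (lam : {ffun XV V Pl -> ninf}) : Prop :=
  forall h v, is_history XE xinit h v ->
    ninf_le (Xcost (Xo v) (outcome Xo sg h v)) (lam v).

Lemma spe_bounded_lam0 : spe_bounded_by (lam0 owner).
Proof.
move=> h v _; rewrite ffunE; case: ifP => [served|_]; last by case: Xcost.
by rewrite /Xcost cost_eq0 // inE.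
Qed.

Lemma spe_outcome_Lambda lam h v :
  spe_bounded_by lam -> is_history XE xinit h v ->
  Lambda owner E F lam v (outcome Xo sg h v).
Proof.
move=> bounded hist; split; first by split=> //; apply: outcome_play; case: spe.
move=> n; have [h' [hist' ->]] := suffix_outcome_history n spe.1 hist.
exact: bounded.
Qed.

Lemma Xcost_one_step_deviation h v u :
  is_history XE xinit h v -> Xo v \notin v.2 -> XE v u ->
  ninf_le (Xcost (Xo v) (outcome Xo sg h v))
          (ninf_succ (Xcost (Xo v) (outcome Xo sg (rcons h v) u))).
Proof.
move=> hist unserved Evu; apply: (NE_one_step_deviation (E := XE)) => //.
- exact: spe.1.
- exact: spe.2 _ _ hist.
- move=> w /(history_subset hist) sub; rewrite inE.
  by apply: contra unserved; apply: (subsetP sub).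
- by rewrite inE.
Qed.

Lemma spe_bounded_update (J : seq {set Pl}) lam n :
  spe_bounded_by lam -> spe_bounded_by (update owner E F J lam n).
Proof.
move=> bounded h v hist; rewrite ffunE; case: ifP => _; last exact: bounded.
case: ifP => [served|unserved]; first by rewrite /Xcost cost_eq0 // inE.
apply: ninf_le_succ_foldr_min => u; rewrite mem_enum inE => Evu.
apply: ninf_le_trans (Xcost_one_step_deviation hist (negbT unserved) Evu) _.
rewrite ninf_le_succ; apply: ninf_sup_ub.
exists (outcome Xo sg (rcons h v) u); split=> //.
exact/spe_outcome_Lambda/is_history_rcons.
Qed.

Lemma spe_bounded_lamseq J k : spe_bounded_by (lamseq owner E F J k).1.
Proof.
elim: k => [|k IHk] /=; first exact: spe_bounded_lam0.
by case: (lamseq _ _ _ _ k) IHk => lam n /= /spe_bounded_update; apply.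
Qed.

End ExtendedGame.

Theorem proposition2p13 (V Pl : finType) (owner : V -> Pl) (E : rel V)
    (F : Pl -> {set V}) (v0 : V) (J : seq {set Pl})
    (lamstar : {ffun XV V Pl -> option nat}) (sg : profile (XV V Pl) Pl) :
  (2 <= #|V|)%N -> (#|Pl| <= #|V|)%N -> (forall v, exists v', E v v') ->
  valid_order E F v0 J ->
  (exists K, forall k, (K <= k)%N -> (lamseq owner E F J k).1 = lamstar) ->
  SPE (@Xowner V Pl owner) (Xedge E F) (@XF V Pl) sg (x0 F v0) ->
  (forall u, connect (Xedge E F) (x0 F v0) u ->
     exists rho, Lambda owner E F lamstar u rho) /\
  Lambda owner E F lamstar (x0 F v0) (outcome (@Xowner V Pl owner) sg [::] (x0 F v0)).
Proof.
(* The bound on SPE continuations survives every update, whatever its block. *)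
move=> _ _ _ _ [K stable] spe.
have bounded : spe_bounded_by owner E F v0 sg lamstar.
  rewrite -(stable K) //; exact: spe_bounded_lamseq spe J K.
split; last by apply: (spe_outcome_Lambda spe bounded); rewrite /= eqxx.
move=> u /connect_history [h hist].
exists (outcome (Xowner owner) sg h u); exact: (spe_outcome_Lambda spe bounded hist).
Qed.
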